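(* Assume all features are binary, $x_{i,k}\in\{0,1\}$ for all $i\in[n],k\in[p]$. Let $\mathbf q\in\mathbb R^{2nK}_{\ge0}$, $r\ge0$ and $T\in\mathbb R$, and for $k\in[p]$ define $$\mathrm{Prune}(k\mid\mathbf q,r)=\sum_{i\in[n]}\max\Big\{\sum_{l\in\mathcal D_i}q_{il}x_{l,k},\;x_{i,k}\Big[\sum_{l\in\mathcal D_i}q_{il}-\sum_{j\in\mathcal S_i}q_{ij}(1-x_{j,k})\Big]\Big\}+r\sqrt{\sum_{i\in[n]}\Big[\sum_{l\in\mathcal D_i}\max\{x_{i,k},x_{l,k}\}+\sum_{j\in\mathcal S_i}\max\{x_{i,k},x_{j,k}\}\Big]}.$$ If $\mathrm{Prune}(k\mid\mathbf q,r)\le T$, then for every descendant $k'\supseteq k$ of $k$, $\mathbf C_{k',:}\mathbf q+r\|\mathbf C_{k',:}\|_2\le T$.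
   Context: Let $n,K,p\ge1$ be integers and $[n]=\{1,\dots,n\}$. For each $i\in[n]$ let $\mathbf x_i=(x_{i,1},\dots,x_{i,p})^\top\in\mathbb R^p$, and let $\mathcal D_i,\mathcal S_i\subseteq[n]$ be sets of size $K$ (different-class resp. same-class neighbors of sample $i$). For $i,j\in[n]$ put $\mathbf c_{ij}=(\mathbf x_i-\mathbf x_j)\circ(\mathbf x_i-\mathbf x_j)$ (entrywise product). Vectors in $\mathbb R^{2nK}$ are indexed by the pairs $(i,l)$, $i\in[n]$, $l\in\mathcal D_i$ (''different-class pairs''), and the pairs $(i,j)$, $i\in[n]$, $j\in\mathcal S_i$ (''same-class pairs''); $\mathbf q$ has entries $q_{il},q_{ij}$. $\mathbf C\in\mathbb R^{p\times2nK}$ has column $\mathbf c_{il}$ for each different-class pair and column $-\mathbf c_{ij}$ for each same-class pair; $\mathbf C_{k,:}$ is its $k$-th row. The feature indices $[p]$ are nodes of a rooted graph-mining tree: $x_{i,k}=g(\#(H_k\sqsubseteq G_i))$ with $g(x)=1_{x>0}$, where $H_k$ is the subgraph at node $k$, $G_i$ the $i$-th input graph, $\#(H\sqsubseteq G)$ the number of non-overlapping occurrences of $H$ in $G$, and each node's subgraph is contained in its children's subgraphs. Write $k'\supseteq k$ if $k'$ is a descendant of $k$; then $x_{i,k'}\le x_{i,k}$ for all $i$ whenever $k'\supseteq k$. *)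

From HB Require Import structures.
From mathcomp Require Import all_boot all_order all_algebra.
Set Implicit Arguments. Unset Strict Implicit. Unset Printing Implicit Defensive.
Import Order.TTheory GRing.Theory Num.Theory.
Local Open Scope ring_scope.

Section Defs.
Variables (R : rcfType) (n p : nat).
(* x i k = x_{i,k}; D i = D_i (different-class neighbours), S i = S_i (same-class).
   qD i l = q_{il} for l in D i ;  qS i j = q_{ij} for j in S i. *)
Variables (x : 'I_n -> 'I_p -> R) (D S : 'I_n -> {set 'I_n})
          (qD qS : 'I_n -> 'I_n -> R).

(* k-th coordinate of c_{ij} = (x_i - x_j) o (x_i - x_j) *)
Definition cc (i j : 'I_n) (k : 'I_p) : R := (x i k - x j k) ^+ 2.

Definition Crow_q (k : 'I_p) : R :=
  \sum_(i < n) (\sum_(l in D i) qD i l * cc i l k)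
  - \sum_(i < n) (\sum_(j in S i) qS i j * cc i j k).

(* || C_{k,:} ||_2  (the columns for same-class pairs are -c_ij, signs vanish when squared) *)
Definition Crow_norm (k : 'I_p) : R :=
  Num.sqrt (\sum_(i < n) (\sum_(l in D i) (cc i l k) ^+ 2)
          + \sum_(i < n) (\sum_(j in S i) (- cc i j k) ^+ 2)).

Definition Prune (r : R) (k : 'I_p) : R :=
  \sum_(i < n)
     Num.max (\sum_(l in D i) qD i l * x l k)
             (x i k * ((\sum_(l in D i) qD i l)
                        - \sum_(j in S i) qS i j * (1 - x j k)))
  + r * Num.sqrt (\sum_(i < n)
        ((\sum_(l in D i) Num.max (x i k) (x l k))
         + \sum_(j in S i) Num.max (x i k) (x j k))).
End Defs.

From mathcomp Require Import all_boot all_order all_algebra.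
From mathcomp Require Import lra.
Set Implicit Arguments. Unset Strict Implicit. Unset Printing Implicit Defensive.
Import Order.TTheory GRing.Theory Num.Theory.
Local Open Scope ring_scope.

(* For binary features the squared differences are themselves binary, and a
   descendant feature column is pointwise below its ancestor.  Sample by sample,
   if H_k' does not occur in G_i then c_{il,k'} = x_{l,k'} <= x_{l,k} and the
   same-class terms only decrease the sum; if it does occur then x_{i,k} = 1,
   c_{il,k'} <= 1 and c_{ij,k'} = 1 - x_{j,k'} >= 1 - x_{j,k}.  For the norm,
   c_{ij,k'}^2 = |x_{i,k'} - x_{j,k'}| <= max (x_{i,k}, x_{j,k}). *)

Section Binary.
Variable R : realDomainType.

Definition binary (a : R) := a = 0 \/ a = 1.

Lemma binary_ge0 (a : R) : binary a -> 0 <= a.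
Proof. by case=> ->; rewrite ?ler01. Qed.

Lemma binary_sqr (a : R) : binary a -> a ^+ 2 = a.
Proof. by case=> ->; rewrite expr2 ?mul0r ?mul1r. Qed.

Lemma binary1B (a : R) : binary a -> binary (1 - a).
Proof. by case=> ->; rewrite ?subr0 ?subrr; [right | left]. Qed.

Lemma binary_sqrB (a b : R) : binary a -> binary b -> binary ((a - b) ^+ 2).
Proof.
by case=> -> [] ->; rewrite ?subrr ?subr0 ?sub0r ?sqrrN expr2 ?mul0r ?mul1r;
  [left | right | right | left].
Qed.

Lemma sqrB_binary_le_max (a b : R) :
  binary a -> binary b -> (a - b) ^+ 2 <= Num.max a b.
Proof. by case=> -> [] ->; rewrite expr2 le_max; apply/orP; lra. Qed.

End Binary.

Section Descendant.
Variables (R : rcfType) (n p : nat).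
Variables (x : 'I_n -> 'I_p -> R) (D S : 'I_n -> {set 'I_n})
          (qD qS : 'I_n -> 'I_n -> R).
Hypothesis x_binary : forall i k, binary (x i k).
Hypothesis qD_ge0 : forall i l, l \in D i -> 0 <= qD i l.
Hypothesis qS_ge0 : forall i j, j \in S i -> 0 <= qS i j.
Variables k k' : 'I_p.
Hypothesis x_desc : forall i, x i k' <= x i k.

Definition Prune_linear : R :=
  \sum_(i < n)
     Num.max (\sum_(l in D i) qD i l * x l k)
             (x i k * ((\sum_(l in D i) qD i l)
                        - \sum_(j in S i) qS i j * (1 - x j k))).

Definition Prune_support : R :=
  \sum_(i < n)
    ((\sum_(l in D i) Num.max (x i k) (x l k))
     + \sum_(j in S i) Num.max (x i k) (x j k)).

Lemma PruneE r : Prune x D S qD qS r k = Prune_linear + r * Num.sqrt Prune_support.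
Proof. by []. Qed.

Lemma sample_Crow_q_le_max i :
  \sum_(l in D i) qD i l * cc x i l k' - \sum_(j in S i) qS i j * cc x i j k'
  <= Num.max (\sum_(l in D i) qD i l * x l k)
             (x i k * ((\sum_(l in D i) qD i l)
                        - \sum_(j in S i) qS i j * (1 - x j k))).
Proof.
rewrite le_max; case: (x_binary i k') => xik'; apply/orP; [left | right].
- have ccE j : cc x i j k' = x j k' by rewrite /cc xik' sub0r sqrrN binary_sqr.
  rewrite -[leRHS]subr0; apply: lerB.
    apply: ler_sum => l /qD_ge0 q_ge0; rewrite ccE; exact: ler_wpM2l.
  apply: sumr_ge0 => j /qS_ge0 q_ge0; exact/mulr_ge0/sqr_ge0.
- have xik : x i k = 1.
    case: (x_binary i k) => // xik0.
    by have := x_desc i; rewrite xik' xik0 ler10.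
  have ccE j : cc x i j k' = 1 - x j k' by rewrite /cc xik' binary_sqr //; apply: binary1B.
  rewrite xik mul1r; apply: lerB.
    apply: ler_sum => l /qD_ge0 q_ge0; rewrite ccE -[leRHS]mulr1.
    by apply: ler_wpM2l => //; rewrite gerBl binary_ge0.
  apply: ler_sum => j /qS_ge0 q_ge0; rewrite ccE.
  by apply: ler_wpM2l => //; rewrite lerB.
Qed.

Lemma Crow_q_le_Prune_linear : Crow_q x D S qD qS k' <= Prune_linear.
Proof. by rewrite /Crow_q -sumrB; apply: ler_sum => i _; apply: sample_Crow_q_le_max. Qed.

Lemma sqr_cc_le_max i j : cc x i j k' ^+ 2 <= Num.max (x i k) (x j k).
Proof.
rewrite binary_sqr /cc; last exact: binary_sqrB.
exact: le_trans (sqrB_binary_le_max _ _) (le_max2 (x_desc i) (x_desc j)).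
Qed.

Lemma Crow_norm_le_sqrt_Prune_support :
  Crow_norm x D S k' <= Num.sqrt Prune_support.
Proof.
have max_ge0 i j : 0 <= Num.max (x i k) (x j k).
  by rewrite le_max binary_ge0.
rewrite ler_sqrt; last first.
  by apply: sumr_ge0 => i _; apply: addr_ge0; apply: sumr_ge0.
rewrite -big_split; apply: ler_sum => i _; apply: lerD; apply: ler_sum => j _.
  exact: sqr_cc_le_max.
by rewrite sqrrN; apply: sqr_cc_le_max.
Qed.

End Descendant.

Theorem lemma2 (R : rcfType) (n K p : nat)
  (x : 'I_n -> 'I_p -> R) (D S : 'I_n -> {set 'I_n})
  (qD qS : 'I_n -> 'I_n -> R)
  (desc : 'I_p -> 'I_p -> Prop)
  (hD : forall i, #|D i| = K) (hS : forall i, #|S i| = K)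
  (hbin : forall i k, x i k = 0 \/ x i k = 1)
  (hmono : forall k k', desc k k' -> forall i, x i k' <= x i k)
  (hqD : forall i l, l \in D i -> 0 <= qD i l)
  (hqS : forall i j, j \in S i -> 0 <= qS i j)
  (r T : R) (hr : 0 <= r) (k : 'I_p) :
  Prune x D S qD qS r k <= T ->
  forall k' : 'I_p, desc k k' ->
    Crow_q x D S qD qS k' + r * Crow_norm x D S k' <= T.
Proof.
move=> hPrune k' /hmono x_desc; apply: le_trans hPrune; rewrite PruneE.
apply: lerD; first exact: Crow_q_le_Prune_linear.
by apply: ler_wpM2l => //; exact: Crow_norm_le_sqrt_Prune_support.
Qed.
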